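(* Let $q\geq 3$ be an odd prime power and $m\geq 2$ an integer with $q^m\geq 25$. Then the third largest odd coset leader modulo $q^m-1$ is $$\delta_3=\begin{cases}(q-1)q^{m-1}-q^{\lceil\frac{2m-1}{3}\rceil}-q^{\lfloor\frac{m}{3}-1\rfloor}-1 & \text{if } 3\nmid(m+1),\\ (q-1)q^{m-1}-q^{\frac{2m-1}{3}}-q^{\frac{m+1}{3}}-1 & \text{if } 3\mid(m+1).\end{cases}$$ Moreover, $|C_{\delta_3}^{(q,q^m-1)}|=m$.
   Context: $C_i^{(q,N)}=\{i,iq,iq^2,\ldots\}\bmod N$ denotes the $q$-cyclotomic coset of $i$ modulo $N$; its smallest element is its coset leader. An odd coset leader modulo $N$ is a coset leader that is an odd integer. *)

From mathcomp Require Import all_boot.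
Set Implicit Arguments. Unset Strict Implicit. Unset Printing Implicit Defensive.

(* The sequence (i q^j mod N)_j takes values in
   [0, N) and each term determines the next, so all its values already
   occur among j = 0 .. N-1; hence this is the full coset. *)
Definition cyc_coset (q N i : nat) : seq nat :=
  undup [seq (i * q ^ j) %% N | j <- iota 0 N].

Definition coset_leader (q N i : nat) : bool :=
  (i < N) && all (fun x => i <= x) (cyc_coset q N i).

Definition odd_coset_leader (q N i : nat) : bool :=
  odd i && coset_leader q N i.

Definition third_largest_odd_coset_leader (q N d : nat) : Prop :=
  odd_coset_leader q N d /\
  count (fun i => odd_coset_leader q N i && (d < i)) (iota 0 N) = 2.

Definition prime_power (q : nat) : Prop :=
  exists p k, prime p /\ 0 < k /\ q = p ^ k.

From mathcomp Require Import all_boot zify.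
Set Implicit Arguments. Unset Strict Implicit. Unset Printing Implicit Defensive.

(* Write numbers below N = q^m - 1 with m base-q digits: multiplication by q
   modulo N rotates the digits cyclically, and (N - c) q^k = N - c q^k mod N.
   Hence N - c is an odd coset leader iff c is odd and is the largest of its
   rotations, and the odd coset leaders above N - e, where
   e = q^(m-1) + q^a + q^b is the complement of the claimed delta_3, correspond
   to the odd rotation-maximal c < e.  Such a c has a leading digit 1 in
   position m - 1; comparing c with the rotations that bring its next nonzero
   digits to the top leaves only c = q^(m-1) and c = q^(m-1) + q^t + q^t' with
   the three cyclic gaps between the digits as balanced as possible (2q + 1
   when m = 2).  Finally e exceeds all its nontrivial rotations, so its coset
   has m elements. *)

(* [lia] maps [q ^ e] to [Z.pow] and case-splits on every truncated subtraction
   inside an exponent, which blows up; [pow_lia] makes each power an atom first. *)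
Ltac pow_lia :=
  repeat match goal with H : context [_ ^ _] |- _ => revert H end;
  repeat match goal with |- context [?x ^ ?e] => generalize (x ^ e); intro end;
  intros; lia.

(** * Rotations modulo q^m - 1 *)

Lemma rot_mod Q1 Q2 A B : A < Q2 -> B < Q1 -> A * Q1 + B < Q1 * Q2 - 1 ->
  ((A * Q1 + B) * Q2) %% (Q1 * Q2 - 1) = B * Q2 + A.
Proof.
move=> ltA ltB ltx.
have Q1B : Q1.-1 * Q2 = Q1 * Q2 - Q2 by rewrite -subn1 mulnBl mul1n.
have Q2le : Q2 <= Q1 * Q2 by rewrite leq_pmull //; lia.
have rot_lt : B * Q2 + A < Q1 * Q2 - 1.
  have [eB|neB] := eqVneq B Q1.-1.
    have : A.+1 * Q1 < Q2 * Q1 by rewrite mulSn mulnC; lia.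
    by rewrite ltn_pmul2r ?eB ?Q1B; lia.
  have : B.+1 * Q2 <= Q1.-1 * Q2 by rewrite leq_mul2r; lia.
  by rewrite mulSn Q1B; lia.
have -> : (A * Q1 + B) * Q2 = A * (Q1 * Q2 - 1) + (B * Q2 + A).
  rewrite mulnBr muln1 mulnDl mulnA.
  have : A <= A * Q1 * Q2 by rewrite -mulnA leq_pmulr //; lia.
  lia.
by rewrite modnMDl modn_small.
Qed.

Lemma rot_mod_compl Q1 Q2 A B : A < Q2 -> B < Q1 -> 0 < A * Q1 + B < Q1 * Q2 - 1 ->
  ((Q1 * Q2 - 1 - (A * Q1 + B)) * Q2) %% (Q1 * Q2 - 1)
  = Q1 * Q2 - 1 - ((A * Q1 + B) * Q2) %% (Q1 * Q2 - 1).
Proof.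
move=> ltA ltB /andP [x_gt0 ltx].
have Q1A : (Q2.-1 - A) * Q1 = Q2 * Q1 - Q1 - A * Q1 by rewrite -subn1 !mulnBl mul1n.
have Q2B : (Q1.-1 - B) * Q2 = Q1 * Q2 - Q2 - B * Q2 by rewrite -subn1 !mulnBl mul1n.
have AQ1 : A.+1 * Q1 <= Q2 * Q1 by rewrite leq_mul2r; lia.
have BQ2 : B.+1 * Q2 <= Q1 * Q2 by rewrite leq_mul2r; lia.
rewrite mulSn in AQ1 BQ2.
have -> : Q1 * Q2 - 1 - (A * Q1 + B) = (Q2.-1 - A) * Q1 + (Q1.-1 - B).
  by rewrite Q1A [Q2 * Q1]mulnC; lia.
rewrite !rot_mod; [|lia..].
by rewrite Q2B; lia.
Qed.

(* Multiplication by [q] rotates the [m] base-[q] digits, so [c] is the largest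
   of its rotations; by [coset_leader_compl], [q ^ m - 1 - c] is a coset leader. *)
Definition rot_max q m c := forall k, k < m -> (c * q ^ k) %% (q ^ m - 1) <= c.

Lemma expnD_eq q a b c : a + b = c -> q ^ a * q ^ b = q ^ c.
Proof. by move<-; rewrite expnD. Qed.

Definition lexle u v u' v' := (u < u') || (u == u') && (v <= v').
Definition lexlt u v u' v' := (u < u') || (u == u') && (v < v').

Section PowerSums.

Variable q : nat.
Hypothesis q_gt1 : 1 < q.

Lemma leq_double_exp u v : v < u -> 2 * q ^ v <= q ^ u.
Proof.
move=> ltvu; apply: (@leq_trans (q ^ v.+1)); last by rewrite leq_exp2l.
by rewrite expnS leq_mul2r q_gt1 orbT.
Qed.

Lemma leq_add_exp u v u' v' : v < u -> v' < u' ->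
  (q ^ u + q ^ v <= q ^ u' + q ^ v') = lexle u v u' v'.
Proof.
move=> ltvu ltvu'; rewrite /lexle; case: (ltngtP u u') => [ltu | ltu' | <-]; last first.
- by rewrite leq_add2l leq_exp2l.
- have := leq_double_exp ltu'; have : q ^ v' < q ^ u' by rewrite ltn_exp2l.
  have : q ^ v < q ^ u by rewrite ltn_exp2l.
  lia.
have := leq_double_exp ltu; have : q ^ v < q ^ u by rewrite ltn_exp2l.
lia.
Qed.

Lemma ltn_add_exp u v u' v' : v < u -> v' < u' ->
  (q ^ u + q ^ v < q ^ u' + q ^ v') = lexlt u v u' v'.
Proof.
move=> ltvu ltvu'; rewrite ltnNge leq_add_exp // /lexle /lexlt.
by case: (ltngtP u u') => //= _; rewrite -ltnNge.
Qed.

End PowerSums.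

Section Rotation.

Variables q m : nat.
Hypothesis q_gt1 : 1 < q.

Local Notation N := (q ^ m - 1).
Local Notation P := (q ^ (m - 1)).

Let expq_gt0 k : 0 < q ^ k.
Proof. by rewrite expn_gt0 ltnW. Qed.

Lemma rot_split H R p : p < m -> R < q ^ p.+1 -> H * q ^ p.+1 + R < N ->
  ((H * q ^ p.+1 + R) * q ^ (m - 1 - p)) %% N = R * q ^ (m - 1 - p) + H.
Proof.
move=> ltpm ltR ltc.
have eN : q ^ m = q ^ p.+1 * q ^ (m - 1 - p) by rewrite -expnD; congr (_ ^ _); lia.
rewrite eN in ltc *; apply: rot_mod => //.
have : H * q ^ p.+1 < q ^ (m - 1 - p) * q ^ p.+1 by rewrite mulnC; lia.
by rewrite ltn_pmul2r.
Qed.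

Lemma rot_split_lt H R p : p < m -> R < q ^ p -> H * q ^ p.+1 + R < N ->
  ((H * q ^ p.+1 + R) * q ^ (m - 1 - p)) %% N < P.
Proof.
move=> ltpm ltR ltc.
have ltR' : R < q ^ p.+1 by rewrite (leq_trans ltR) // leq_exp2l; lia.
rewrite rot_split //.
have eP : P = q ^ p * q ^ (m - 1 - p) by rewrite -expnD; congr (_ ^ _); lia.
have eN : q ^ m = q ^ p.+1 * q ^ (m - 1 - p) by rewrite -expnD; congr (_ ^ _); lia.
have ltH : H < q ^ (m - 1 - p).
  have : H * q ^ p.+1 < q ^ (m - 1 - p) * q ^ p.+1 by rewrite [X in _ < X]mulnC -eN; lia.
  by rewrite ltn_pmul2r.
have : R.+1 * q ^ (m - 1 - p) <= q ^ p * q ^ (m - 1 - p) by rewrite leq_mul2r ltR orbT.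
by rewrite -eP mulSn; lia.
Qed.

Lemma rot_complE c k : 0 < c < N -> k <= m ->
  ((N - c) * q ^ k) %% N = N - (c * q ^ k) %% N.
Proof.
move=> /andP [c_gt0 ltc] lekm.
have eN : q ^ m = q ^ (m - k) * q ^ k by rewrite -expnD subnK.
rewrite eN (divn_eq c (q ^ (m - k))) in ltc c_gt0 *.
apply: rot_mod_compl; rewrite ?ltn_pmod ?c_gt0 //.
by rewrite ltn_divLR // mulnC; lia.
Qed.

Lemma expq_mod j : 0 < m -> q ^ j %% N = q ^ (j %% m) %% N.
Proof.
move=> m_gt0.
rewrite {1}(divn_eq j m) expnD [j %/ m * m]mulnC expnM -modnMml -modnXm.
have -> : q ^ m %% N = 1 %% N by rewrite -{1}(subnK (expq_gt0 m)) modnDl.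
by rewrite modnXm exp1n modnMml mul1n.
Qed.

Lemma coset_leaderP i : 0 < m ->
  coset_leader q N i <-> i < N /\ forall k, k < m -> i <= (i * q ^ k) %% N.
Proof.
move=> m_gt0; have lemN : m <= N by have := ltn_expl m q_gt1; lia.
rewrite /coset_leader /cyc_coset all_undup all_map; split.
  by case/andP => ltiN /allP le_rot; split=> // k ltkm; apply: le_rot; rewrite mem_iota; lia.
case=> ltiN le_rot; rewrite ltiN; apply/allP => j _ /=.
by rewrite -modnMmr expq_mod // modnMmr; apply/le_rot/ltn_pmod.
Qed.

Lemma coset_leader_compl c : 0 < m -> 0 < c < N ->
  coset_leader q N (N - c) <-> rot_max q m c.
Proof.
move=> m_gt0 /andP [c_gt0 ltc]; rewrite coset_leaderP //.
have ltrot k : (c * q ^ k) %% N < N by apply: ltn_pmod; lia.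
split=> [[_ le_rot] k ltkm | cmax].
  by have := le_rot k ltkm; rewrite rot_complE ?c_gt0 //; [have := ltrot k; lia | lia].
split=> [|k ltkm]; first lia.
by have := cmax k ltkm; rewrite rot_complE ?c_gt0 //; [have := ltrot k; lia | lia].
Qed.

Lemma rot_max_split c H R p : rot_max q m c -> p < m -> R < q ^ p.+1 ->
  c = H * q ^ p.+1 + R -> c < N -> R * q ^ (m - 1 - p) + H <= c.
Proof.
by move=> cmax ltpm ltR ec ltc; rewrite -rot_split -?ec //; apply: cmax; lia.
Qed.

Lemma rot_max_of_le c :
  (forall k, 0 < k < m -> (c * q ^ k) %% N <= c) -> rot_max q m c.
Proof. by move=> le_rot [|k] ltkm; [rewrite muln1 leq_mod | apply: le_rot]. Qed.

Lemma size_cyc_coset d : 0 < m -> d < N ->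
  (forall k, 0 < k < m -> (d * q ^ k) %% N != d) -> size (cyc_coset q N d) = m.
Proof.
move=> m_gt0 ltd rot_neq.
pose g j := (d * q ^ j) %% N.
have g_mod j : g j = g (j %% m) by rewrite /g -modnMmr expq_mod // modnMmr.
have g_add i j : g (i + j) = (g i * q ^ j) %% N by rewrite /g modnMml -mulnA -expnD.
have g0 : g 0 = d by rewrite /g muln1 modn_small.
have g_neq i j : i < j < m -> g i != g j.
  case/andP=> ltij ltjm; apply: contraNneq (rot_neq (j - i) _) => [e|]; last lia.
  rewrite -/(g (j - i)).
  have -> : j - i = (j + (m - i)) %% m.
    by rewrite (_ : j + (m - i) = j - i + m) ?modnDr ?modn_small //; lia.
  rewrite -g_mod g_add -e -g_add subnKC ?(ltnW (ltn_trans ltij ltjm)) //.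
  by rewrite g_mod modnn g0.
have g_inj : {in iota 0 m &, injective g}.
  move=> i j; rewrite !mem_iota /= => lti ltj e.
  by case: (ltngtP i j) => // [ltij|ltji]; [move: (g_neq i j) | move: (g_neq j i)];
    rewrite e eqxx; lia.
have lemN : m <= N by have := ltn_expl m q_gt1; lia.
have coset_eq : cyc_coset q N d =i [seq g j | j <- iota 0 m].
  move=> x; rewrite mem_undup; apply/mapP/mapP => -[j].
    rewrite mem_iota /= => ltj ->; exists (j %% m); last exact: g_mod.
    by rewrite mem_iota ltn_pmod.
  rewrite mem_iota /= => ltj ->; exists j => //.
  by rewrite mem_iota; lia.
rewrite (perm_size (uniq_perm (undup_uniq _) _ coset_eq)) ?size_map ?size_iota //.
by rewrite map_inj_in_uniq ?iota_uniq.
Qed.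

Lemma rot_max_ge_top c : 1 < m -> 0 < c < N -> rot_max q m c -> P <= c.
Proof.
move=> m_gt1 /andP [c_gt0 ltc] cmax; rewrite leqNgt; apply/negP => ltcP.
have := trunc_log_ltn c q_gt1; have := trunc_logP q_gt1 c_gt0.
set t := trunc_log q c => le_tc lt_ct.
have lttm : t < m - 1 by rewrite -(ltn_exp2l _ _ q_gt1); lia.
have : c * q ^ (m - 1 - t) + 0 <= c.
  by apply: (rot_max_split cmax) => //; lia.
have : q ^ t * q ^ (m - 1 - t) <= c * q ^ (m - 1 - t) by rewrite leq_mul2r le_tc orbT.
by rewrite (expnD_eq _ (_ : t + (m - 1 - t) = m - 1)); lia.
Qed.

(* The top digit of [R] is 1: a larger one, rotated to the leading position,
   would exceed [c < 2 * P]. *)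
Lemma rot_max_peel c X R k : rot_max q m c -> c < N -> c < 2 * P -> k < m ->
  c = X + R -> 0 < R < q ^ k -> q ^ k %| X ->
  exists p S, [/\ p < k, R = q ^ p + S, S < q ^ p &
    forall H, X = H * q ^ p.+1 -> (q ^ p + S) * q ^ (m - 1 - p) + H <= c].
Proof.
move=> cmax ltc ltc2P ltkm ec /andP [R_gt0 ltR] dvdX.
have := trunc_log_ltn R q_gt1; have := trunc_logP q_gt1 R_gt0.
set p := trunc_log q R => lepR ltRp.
have ltpk : p < k by rewrite -(ltn_exp2l _ _ q_gt1); lia.
have [H eX] : exists H, X = H * q ^ p.+1.
  by apply/dvdnP; rewrite (dvdn_trans _ dvdX) // dvdn_exp2l.
have le_rot := rot_max_split cmax (ltn_trans ltpk ltkm) ltRp (etrans ec (congr1 (addn^~ R) eX)) ltc.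
have ltR2 : R < 2 * q ^ p.
  rewrite ltnNge; apply/negP => le2R.
  have : 2 * q ^ p * q ^ (m - 1 - p) <= R * q ^ (m - 1 - p) by rewrite leq_mul2r le2R orbT.
  by rewrite -mulnA (expnD_eq _ (_ : p + (m - 1 - p) = m - 1)); lia.
exists p, (R - q ^ p); split; rewrite ?subnKC //; first lia.
move=> H' eX'; suff -> : H' = H by [].
by apply/eqP; rewrite -(eqn_pmul2r (expq_gt0 p.+1)) -eX -eX'.
Qed.

Hypothesis q_odd : odd q.

Let odd_expq k : odd (q ^ k).
Proof. by rewrite oddX q_odd orbT. Qed.

Lemma rot_max_lead_terms c : rot_max q m c -> odd c -> P < c < 2 * P -> c < N ->
  exists t t' S, [/\ t' < t < m - 1, S < q ^ t', c = P + q ^ t + q ^ t' + S,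
    (q ^ t + q ^ t' + S) * q ^ (m - 1 - t) + q ^ (m - 2 - t) <= c &
    (q ^ t' + S) * q ^ (m - 1 - t') + (q ^ (m - 2 - t') + q ^ (t - t' - 1)) <= c].
Proof.
move=> cmax c_odd /andP [ltPc ltc2P] ltc.
have m_gt0 : 0 < m by move: ltc; case: (m) => //; rewrite expn0.
have [t [S [lttm eR ltS le_rot1]]] :
    exists t S, [/\ t < m - 1, c - P = q ^ t + S, S < q ^ t &
      forall H, P = H * q ^ t.+1 -> (q ^ t + S) * q ^ (m - 1 - t) + H <= c].
  by apply: (rot_max_peel cmax) => //; [lia | rewrite subnKC // ltnW | lia].
have ePt : P = q ^ (m - 2 - t) * q ^ t.+1 by rewrite -expnD; congr (_ ^ _); lia.
have {ePt}le_rot1 := le_rot1 _ ePt.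
have ec : c = P + q ^ t + S by lia.
have S_odd : odd S by move: c_odd; rewrite ec !oddD !odd_expq.
have [t' [S' [ltt't eS ltS' le_rot2]]] :
    exists t' S', [/\ t' < t, S = q ^ t' + S', S' < q ^ t' &
      forall H, P + q ^ t = H * q ^ t'.+1 -> (q ^ t' + S') * q ^ (m - 1 - t') + H <= c].
  apply: (rot_max_peel cmax) => //; first lia.
  - by rewrite ltS andbT; case: (S) S_odd.
  - by rewrite dvdn_add ?dvdn_exp2l //; lia.
have ePt' : P + q ^ t = (q ^ (m - 2 - t') + q ^ (t - t' - 1)) * q ^ t'.+1.
  by rewrite mulnDl -!expnD; congr (_ ^ _ + _ ^ _); lia.
have {ePt'}le_rot2 := le_rot2 _ ePt'.
subst S; rewrite !addnA in ec le_rot1.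
by exists t, t', S'; rewrite ltt't lttm.
Qed.

(* Each inequality compares [c] with the rotation bringing [q ^ t], [q ^ t']
   or [q ^ t''] to the leading position. *)
Lemma rot_max_shape c : rot_max q m c -> odd c -> P < c < 2 * P -> c < N ->
  exists t t' S, [/\ t' < t < m - 1, S < q ^ t', c = P + q ^ t + q ^ t' + S &
    (S = 0 /\ lexle (m - 1 - t + t') (m - 2 - t) t t' && lexle (m - 2 - t') (t - t' - 1) t t'
     \/ exists2 t'', 0 < t'' < t' &
           [&& m - 1 - t + t' <= t, m - 1 - t' + t'' <= t & m - 2 - t'' <= t])].
Proof.
move=> cmax c_odd ltc2 ltc.
have [t [t' [S [/andP [ltt't lttm] ltS ec le_rot1 le_rot2]]]] :=
  rot_max_lead_terms cmax c_odd ltc2 ltc.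
have /andP [ltPc ltc2P] := ltc2.
exists t, t', S; rewrite ltt't lttm; split => //.
have eP1 : q ^ t * q ^ (m - 1 - t) = P by apply: expnD_eq; pow_lia.
have eP2 : q ^ t' * q ^ (m - 1 - t') = P by apply: expnD_eq; pow_lia.
have e1 : q ^ t' * q ^ (m - 1 - t) = q ^ (m - 1 - t + t') by apply: expnD_eq; pow_lia.
rewrite !mulnDl eP1 e1 in le_rot1; rewrite mulnDl eP2 in le_rot2.
have [S0|S_gt0] := posnP S.
  subst S; left; split => //.
  by rewrite -!(leq_add_exp q_gt1) ?ltt't //; try apply/andP; try split; pow_lia.
right.
have S_even : ~~ odd S by move: c_odd; rewrite ec !oddD !odd_expq.
have [t'' [S'' [ltt''t' eS ltS'' le_rot3]]] :
    exists t'' S'', [/\ t'' < t', S = q ^ t'' + S'', S'' < q ^ t'' &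
      forall H, P + q ^ t + q ^ t' = H * q ^ t''.+1 ->
        (q ^ t'' + S'') * q ^ (m - 1 - t'') + H <= c].
  apply: (rot_max_peel cmax) => //; first pow_lia.
  - by rewrite S_gt0.
  - by rewrite !dvdn_add ?dvdn_exp2l //; pow_lia.
have ePt'' : P + q ^ t + q ^ t' =
    (q ^ (m - 2 - t'') + q ^ (t - t'' - 1) + q ^ (t' - t'' - 1)) * q ^ t''.+1.
  by rewrite !mulnDl -!expnD; congr (_ ^ _ + _ ^ _ + _ ^ _); pow_lia.
have {ePt''}le_rot3 := le_rot3 _ ePt''.
have eP3 : q ^ t'' * q ^ (m - 1 - t'') = P by apply: expnD_eq; pow_lia.
have e2 : q ^ t'' * q ^ (m - 1 - t') = q ^ (m - 1 - t' + t'') by apply: expnD_eq; pow_lia.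
rewrite mulnDl eP3 in le_rot3; rewrite eS mulnDl e2 in le_rot2.
exists t''.
  have S''_odd : odd S'' by move: S_even; rewrite eS oddD odd_expq /= negbK.
  by rewrite ltt''t' andbT lt0n; apply: contraTneq ltS'' => ->; rewrite -leqNgt; case: (S'') S''_odd.
have lt_tail : q ^ t + q ^ t' + S < q ^ t.+1.
  have := leq_double_exp q_gt1 ltt't; have := leq_double_exp q_gt1 (ltnSn t); pow_lia.
have le_exp e : q ^ e <= q ^ t + q ^ t' + S -> e <= t.
  by move=> le_e; rewrite -ltnS -(ltn_exp2l _ _ q_gt1); pow_lia.
by apply/and3P; split; apply: le_exp; pow_lia.
Qed.

End Rotation.

Lemma odd_rot_max_m2 q c : odd q -> 1 < q -> rot_max q 2 c -> 0 < c < q ^ 2 - 1 -> odd c ->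
  c < 3 * q -> c = q \/ c = 2 * q + 1.
Proof.
move=> q_odd q_gt1 cmax c_bounds c_odd ltc3q.
have le_qc : q <= c.
  by have := rot_max_ge_top q_gt1 (ltnSn 1) c_bounds cmax; rewrite expn1.
have [H [R [ec ltRq]]] : exists H R, c = H * q + R /\ R < q.
  by exists (c %/ q), (c %% q); rewrite -divn_eq ltn_pmod //; lia.
have le_rot : R * q + H <= c.
  have := @rot_max_split q 2 q_gt1 c H R 0 cmax isT.
  by rewrite expn1; apply=> //; lia.
have leRH : R <= H.
  rewrite leqNgt; apply/negP => ltHR.
  have : H.+1 * q <= R * q by rewrite leq_mul2r ltHR orbT.
  rewrite mulSn; lia.
have odd_c : odd c = odd H (+) odd R by rewrite ec oddD oddM q_odd andbT.
have ltH3 : H < 3 by rewrite -(ltn_pmul2r (ltnW q_gt1)); lia.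
have H_gt0 : 0 < H by rewrite lt0n; apply/eqP => H0; move: ec; rewrite H0; lia.
have [eH | eH] : H = 1 \/ H = 2 by lia.
  have [eR | eR] : R = 0 \/ R = 1 by lia.
    by left; lia.
  by move: c_odd; rewrite odd_c eH eR.
have [eR | [eR | eR]] : R = 0 \/ R = 1 \/ R = 2 by lia.
- by move: c_odd; rewrite odd_c eH eR.
- by right; lia.
- by move: c_odd; rewrite odd_c eH eR.
Qed.

(** * Rotations of numbers with few nonzero digits *)

Section SparseRotations.

Variables q m : nat.
Hypothesis q_gt2 : 2 < q.

Local Notation N := (q ^ m - 1).
Local Notation P := (q ^ (m - 1)).

Let q_gt1 : 1 < q. Proof. exact: ltnW. Qed.

Let expq_gt0 k : 0 < q ^ k.
Proof. by rewrite expn_gt0 ltnW. Qed.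

Let expq_split a b : b < a -> q ^ a = q ^ (a - b.+1) * q ^ b.+1.
Proof. by move=> ltba; rewrite -expnD subnK. Qed.

Lemma lt_rot_lead X k : 1 < m -> 0 < X < q -> 0 < k < m ->
  (X * P * q ^ k) %% N < P.
Proof.
move=> m_gt1 /andP [X_gt0 ltXq] /andP [k_gt0 ltkm].
have eN : q ^ m = q * P by rewrite -expnS; congr (_ ^ _); lia.
have le_q_P : q <= P by rewrite -{1}(expn1 q) leq_exp2l; lia.
have ltXP : X * P < N.
  have : X.+1 * P <= q * P by rewrite leq_mul2r ltXq orbT.
  rewrite eN mulSn; pow_lia.
have [p -> ltp] : exists2 p, k = m - 1 - p & p < m - 1 by exists (m - 1 - k); lia.
have eX : X * P = X * q ^ (m - 1 - p.+1) * q ^ p.+1 + 0 by rewrite addn0 -mulnA -expq_split.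
by rewrite eX rot_split_lt -?eX //; lia.
Qed.

Lemma rot3_cases t t' k : t' < t < m - 1 -> 0 < k < m ->
  let r := ((P + q ^ t + q ^ t') * q ^ k) %% N in
  [\/ r < P, r = P + q ^ (m - 1 - t + t') + q ^ (m - 2 - t)
     | r = P + q ^ (m - 2 - t') + q ^ (t - t' - 1)].
Proof.
move=> /andP [ltt't lttm] /andP [k_gt0 ltkm] r.
have eN : q ^ m = q * P by rewrite -expnS; congr (_ ^ _); lia.
have le_3P_qP : 3 * P <= q * P by rewrite leq_mul2r q_gt2 orbT.
have [le2t le2t'] := (leq_double_exp q_gt1 lttm, leq_double_exp q_gt1 ltt't).
have ltc : P + q ^ t + q ^ t' < N by have := expq_gt0 t'; rewrite eN; pow_lia.
have [p ek ltp] : exists2 p, k = m - 1 - p & p < m - 1 by exists (m - 1 - k); lia.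
rewrite {}/r {}ek.
have rot_small H R : R < q ^ p -> P + q ^ t + q ^ t' = H * q ^ p.+1 + R ->
    ((P + q ^ t + q ^ t') * q ^ (m - 1 - p)) %% N < P.
  by move=> ltR ec; rewrite ec; apply: rot_split_lt; rewrite -?ec //; lia.
case: (ltngtP p t) => [ltpt | lttp | ept]; last first.
- apply: Or32; subst p.
  rewrite (_ : P + _ + _ = q ^ (m - 1 - t.+1) * q ^ t.+1 + (q ^ t + q ^ t'));
    last by rewrite (expq_split ltp) addnA.
  rewrite rot_split //; last 3 first.
  + lia.
  + by have := leq_double_exp q_gt1 (ltnSn t); have := expq_gt0 t'; pow_lia.
  + by rewrite addnA -(expq_split ltp).
  by rewrite mulnDl -!expnD; congr (_ ^ _ + _ ^ _ + _ ^ _); lia.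
- apply: Or31; apply: (rot_small (q ^ (m - 1 - p.+1)) (q ^ t + q ^ t')).
    by have := leq_double_exp q_gt1 lttp; have := expq_gt0 t'; pow_lia.
  by rewrite (expq_split ltp) addnA.
case: (ltngtP p t') => [ltpt' | ltt'p | ept'].
- apply: Or31; apply: (rot_small (q ^ (m - 1 - p.+1) + q ^ (t - p.+1) + q ^ (t' - p.+1)) 0) => //.
  by rewrite (expq_split ltp) (expq_split ltpt) (expq_split ltpt') !mulnDl addn0.
- apply: Or31; apply: (rot_small (q ^ (m - 1 - p.+1) + q ^ (t - p.+1)) (q ^ t')).
    by rewrite ltn_exp2l.
  by rewrite (expq_split ltp) (expq_split ltpt) mulnDl.
apply: Or33; subst p.
rewrite (_ : P + _ + _ = (q ^ (m - 1 - t'.+1) + q ^ (t - t'.+1)) * q ^ t'.+1 + q ^ t');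
  last by rewrite (expq_split ltp) (expq_split ltpt) mulnDl.
rewrite rot_split //; last 3 first.
- lia.
- by rewrite ltn_exp2l.
- by rewrite mulnDl -!expq_split.
by rewrite -expnD addnA; congr (_ ^ _ + _ ^ _ + _ ^ _); lia.
Qed.

Lemma rot_max3 t t' : t' < t < m - 1 ->
  lexle (m - 1 - t + t') (m - 2 - t) t t' -> lexle (m - 2 - t') (t - t' - 1) t t' ->
  rot_max q m (P + q ^ t + q ^ t').
Proof.
move=> tt' le1 le2; have /andP [ltt't lttm] := tt'.
rewrite -(leq_add_exp q_gt1) in le1; rewrite -?(leq_add_exp q_gt1) in le2; try lia.
by apply: rot_max_of_le => k /(rot3_cases tt') [lt_rot | -> | ->]; pow_lia.
Qed.

Lemma rot3_lt t t' k : t' < t < m - 1 -> 0 < k < m ->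
  lexlt (m - 1 - t + t') (m - 2 - t) t t' -> lexlt (m - 2 - t') (t - t' - 1) t t' ->
  ((P + q ^ t + q ^ t') * q ^ k) %% N < P + q ^ t + q ^ t'.
Proof.
move=> tt' kk lt1 lt2; have /andP [ltt't lttm] := tt'.
rewrite -(ltn_add_exp q_gt1) in lt1; rewrite -?(ltn_add_exp q_gt1) in lt2; try lia.
by have [lt_rot | -> | ->] := rot3_cases tt' kk; pow_lia.
Qed.

Lemma rot_lt_double_lead k : 1 < m -> 0 < k < m ->
  ((2 * P + 1) * q ^ k) %% N < 2 * P + 1.
Proof.
move=> m_gt1 /andP [k_gt0 ltkm].
have eN : q ^ m = q * P by rewrite -expnS; congr (_ ^ _); lia.
have le_3P_qP : 3 * P <= q * P by rewrite leq_mul2r q_gt2 orbT.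
have le_q_P : q <= P by rewrite -{1}(expn1 q) leq_exp2l; lia.
have ltc : 2 * P + 1 < N by rewrite eN; pow_lia.
have [p -> ltp] : exists2 p, k = m - 1 - p & p < m - 1 by exists (m - 1 - k); lia.
have ec : 2 * P + 1 = 2 * q ^ (m - 1 - p.+1) * q ^ p.+1 + 1 by rewrite -mulnA -expq_split.
case: p ltp ec => [|p] ltp ec.
  rewrite ec rot_split -?ec // ?expn1 //; try lia.
  have eP : P = q * q ^ (m - 1 - 1) by rewrite -expnS; congr (_ ^ _); lia.
  have : 3 * q ^ (m - 1 - 1) <= q * q ^ (m - 1 - 1) by rewrite leq_mul2r q_gt2 orbT.
  rewrite subn0 mul1n eP; pow_lia.
rewrite ec; apply: (leq_trans (rot_split_lt _ _ _ _)); rewrite -?ec //; try lia.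
by rewrite -(expn0 q) ltn_exp2l.
Qed.

End SparseRotations.

(** * Exponent arithmetic *)

(* [delta3_hi] and [delta3_lo] are the exponents of the claimed formula for
   delta_3; the three largest odd coset leaders are [q ^ m - 1 - c] for
   [c = q ^ (m - 1)], [delta2_compl q m] and [delta3_compl q m]. *)
Definition delta3_hi m := if ~~ (3 %| m.+1) then (2 * m + 1) %/ 3 else (2 * m - 1) %/ 3.
Definition delta3_lo m := if ~~ (3 %| m.+1) then m %/ 3 - 1 else (m + 1) %/ 3.

Definition delta2_hi m := (2 * m - 1) %/ 3.
Definition delta2_lo m := (m - 1) %/ 3.

Definition delta2_compl q m :=
  if m == 2 then 2 * q + 1 else q ^ (m - 1) + q ^ delta2_hi m + q ^ delta2_lo m.
Definition delta3_compl q m := q ^ (m - 1) + q ^ delta3_hi m + q ^ delta3_lo m.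

Lemma delta3_exps_mod3 m : 3 <= m -> exists n,
  [\/ [/\ m = 3 * n, 0 < n, delta3_hi m = 2 * n & delta3_lo m = n - 1],
      [/\ m = 3 * n + 1, 0 < n, delta3_hi m = 2 * n + 1 & delta3_lo m = n - 1]
    | [/\ m = 3 * n + 2, delta3_hi m = 2 * n + 1 & delta3_lo m = n + 1]].
Proof.
move=> le3m; exists (m %/ 3); rewrite /delta3_hi /delta3_lo.
case: ifP => [/negP ndvd | /negbFE dvd]; last by apply: Or33; split; lia.
have [m3 | m3] : m %% 3 = 0 \/ m %% 3 = 1 by lia.
  by apply: Or31; split; lia.
by apply: Or32; split; lia.
Qed.

Lemma delta3_exps_range m : 2 <= m ->
  [\/ [/\ m = 2, delta3_hi m = 1 & delta3_lo m = 1],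
      [/\ 3 <= m <= 4, delta3_hi m = m - 1 & delta3_lo m = 0]
    | 5 <= m /\ delta3_lo m < delta3_hi m < m - 1].
Proof.
move=> le2m; case: (leqP m 4) => [lem4 | lt4m].
  by case: m le2m lem4 => [|[|[|[|[|m]]]]] // _ _; [apply: Or31 | apply: Or32 ..].
apply: Or33; have le3m : 3 <= m by lia.
by have [n [[? ? -> ->] | [? ? -> ->] | [? -> ->]]] := delta3_exps_mod3 le3m; lia.
Qed.

Lemma delta3_exps_lt m : 5 <= m ->
  let a := delta3_hi m in let b := delta3_lo m in
  lexlt (m - 1 - a + b) (m - 2 - a) a b && lexlt (m - 2 - b) (a - b - 1) a b.
Proof.
move=> le5m; have le3m : 3 <= m by lia.
by have [n [[? ? -> ->] | [? ? -> ->] | [? -> ->]]] := delta3_exps_mod3 le3m;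
  rewrite /lexlt; lia.
Qed.

Lemma delta2_exps m : 3 <= m ->
  let t := delta2_hi m in let t' := delta2_lo m in
  [&& t' < t < m - 1, lexle (m - 1 - t + t') (m - 2 - t) t t'
    & lexle (m - 2 - t') (t - t' - 1) t t'].
Proof. by rewrite /delta2_hi /delta2_lo /lexle; lia. Qed.

Lemma delta2_exps_lt m : 5 <= m ->
  lexlt (delta2_hi m) (delta2_lo m) (delta3_hi m) (delta3_lo m).
Proof.
move=> le5m; have le3m : 3 <= m by lia.
by have [n [[? ? -> ->] | [? ? -> ->] | [? -> ->]]] := delta3_exps_mod3 le3m;
  rewrite /lexlt /delta2_hi /delta2_lo; lia.
Qed.

Lemma rot3_exps_eq m t t' : 3 <= m -> t' < t < m - 1 ->
  lexle (m - 1 - t + t') (m - 2 - t) t t' -> lexle (m - 2 - t') (t - t' - 1) t t' ->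
  m <= 4 \/ lexlt t t' (delta3_hi m) (delta3_lo m) ->
  t = delta2_hi m /\ t' = delta2_lo m.
Proof.
move=> le3m; rewrite /lexle /lexlt /delta2_hi /delta2_lo.
by have [n [[? ? -> ->] | [? ? -> ->] | [? -> ->]]] := delta3_exps_mod3 le3m; lia.
Qed.

Lemma rot4_exps_absurd m t t' t'' : 3 <= m -> t' < t < m - 1 -> 0 < t'' < t' ->
  [&& m - 1 - t + t' <= t, m - 1 - t' + t'' <= t & m - 2 - t'' <= t] ->
  m <= 4 \/ lexlt t t' (delta3_hi m) (delta3_lo m) -> False.
Proof.
move=> le3m; rewrite /lexlt.
by have [n [[? ? -> ->] | [? ? -> ->] | [? -> ->]]] := delta3_exps_mod3 le3m; lia.
Qed.

Lemma count_pred2_iota n x y : x < n -> y < n -> x != y ->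
  count (fun i => (i == x) || (i == y)) (iota 0 n) = 2.
Proof.
move=> ltx lty neq_xy.
have disj : count (predI (pred1 x) (pred1 y)) (iota 0 n) = 0.
  apply/eqP; rewrite -leqn0 leqNgt -has_count.
  by apply/hasP => -[i _ /andP [/eqP -> /eqP eq_xy]]; rewrite eq_xy eqxx in neq_xy.
have := count_predUI (pred1 x) (pred1 y) (iota 0 n).
by rewrite disj addn0 !count_uniq_mem ?iota_uniq // !mem_iota /= ltx lty.
Qed.


(** * The three largest odd coset leaders *)

Section LargestOddLeaders.

Variables q m : nat.
Hypotheses (q_odd : odd q) (q_gt2 : 2 < q) (m_gt1 : 1 < m) (qm_ge25 : 25 <= q ^ m).

Local Notation N := (q ^ m - 1).
Local Notation P := (q ^ (m - 1)).

Let q_gt1 : 1 < q. Proof. exact: ltnW. Qed.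

Let expq_gt0 k : 0 < q ^ k.
Proof. by rewrite expn_gt0 ltnW. Qed.

Let odd_expq k : odd (q ^ k).
Proof. by rewrite oddX q_odd orbT. Qed.

Let eN : q ^ m = q * P.
Proof. by rewrite -expnS; congr (_ ^ _); lia. Qed.

Let odd_N_sub c : c <= N -> odd (N - c) = odd c.
Proof. by move=> lecN; rewrite oddB // oddB ?expq_gt0 // odd_expq. Qed.


Let le_3P_qP : 3 * P <= q * P.
Proof. by rewrite leq_mul2r q_gt2 orbT. Qed.

Let q_gt4_sq : m = 2 -> 4 < q.
Proof.
move=> m2; rewrite ltnNge; apply/negP => le_q4.
have : q ^ 2 <= 4 ^ 2 by rewrite leq_exp2r.
by move: qm_ge25; rewrite m2; lia.
Qed.

Lemma lt_double_of_lt_delta3 c : 2 < m -> odd c -> c < delta3_compl q m -> c < 2 * P.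
Proof.
move=> m_gt2 c_odd; rewrite /delta3_compl.
have [[m2 _ _] | [_ -> ->] | [_ /andP [ltba ltam]]] := delta3_exps_range m_gt1.
- by move: m_gt2; rewrite m2.
- have : c != 2 * P by apply: contraTneq c_odd => ->; rewrite oddM.
  rewrite expn0; pow_lia.
have := leq_double_exp q_gt1 ltam; have : q ^ delta3_lo m < q ^ delta3_hi m by rewrite ltn_exp2l.
pow_lia.
Qed.

Lemma odd_rot_max_lt_delta3 c : 0 < c < N -> odd c -> rot_max q m c ->
  c < delta3_compl q m -> c = P \/ c = delta2_compl q m.
Proof.
move=> c_bounds c_odd cmax ltc3; have /andP [_ ltcN] := c_bounds.
have le_Pc := rot_max_ge_top q_gt1 m_gt1 c_bounds cmax.
have [m2 | m_gt2] : m = 2 \/ 2 < m by lia.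
  move: cmax c_bounds ltc3; rewrite /delta2_compl /delta3_compl m2 /= expn1 => cmax c_bounds ltc3.
  by apply: odd_rot_max_m2 => //; lia.
have ltc2P := lt_double_of_lt_delta3 m_gt2 c_odd ltc3.
have [<- | ltPc] : P = c \/ P < c by pow_lia.
  by left.
have [t [t' [S [tt' ltS ec shape]]]] :=
  rot_max_shape q_gt1 q_odd cmax c_odd (introT andP (conj ltPc ltc2P)) ltcN.
have exps_lt : m <= 4 \/ lexlt t t' (delta3_hi m) (delta3_lo m).
  have [[m2 _ _] | [/andP [_ le_m4] _ _] | [_ /andP [ltba ltam]]] :=
    delta3_exps_range m_gt1; [lia | by left | right].
  rewrite -(ltn_add_exp q_gt1) //; first by move: ltc3; rewrite /delta3_compl ec; pow_lia.
  by case/andP: tt'.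
case: shape => [[S0 /andP [le1 le2]] | [t'' tt'' exps]]; last first.
  by case: (rot4_exps_absurd m_gt2 tt' tt'' exps exps_lt).
have [et et'] := rot3_exps_eq m_gt2 tt' le1 le2 exps_lt.
by right; rewrite /delta2_compl ifN ?ec ?S0 ?addn0 ?et ?et' //; lia.
Qed.

Lemma delta3_compl_facts :
  [/\ delta3_compl q m < N, odd (delta3_compl q m) &
      forall k, 0 < k < m -> (delta3_compl q m * q ^ k) %% N < delta3_compl q m].
Proof.
rewrite /delta3_compl.
have [[m2 -> ->] | [_ -> ->] | [m_ge5 /andP [ltba ltam]]] := delta3_exps_range m_gt1.
- have : 5 * q <= q * q by rewrite leq_mul2r q_gt4_sq ?orbT.
  rewrite m2 expn1 -mulnn; split=> [||k kk]; first lia.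
    by rewrite !oddD q_odd.
  have lt3q : 0 < 3 < q by have := q_gt4_sq m2; lia.
  have := @lt_rot_lead q 2 q_gt2 3 k (ltnSn 1) lt3q kk.
  by rewrite expn1 -mulnn (_ : q + q + q = 3 * q); lia.
- rewrite expn0 addnn -mul2n; split=> [||k]; first by rewrite eN; lia.
    by rewrite oddD oddM.
  exact: rot_lt_double_lead.
have := leq_double_exp q_gt1 ltam; have : q ^ delta3_lo m < q ^ delta3_hi m by rewrite ltn_exp2l.
split=> [||k kk]; first by rewrite eN; pow_lia.
  by rewrite !oddD !odd_expq.
by have /andP [lt1 lt2] := delta3_exps_lt m_ge5; apply: rot3_lt => //; rewrite ltba.
Qed.

Lemma rot_max_delta1 : rot_max q m P.
Proof.
apply: rot_max_of_le => k kk; apply: ltnW.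
by have := lt_rot_lead q_gt2 m_gt1 (_ : 0 < 1 < q) kk; rewrite mul1n; apply.
Qed.

Lemma delta2_compl_facts :
  [/\ P < delta2_compl q m < delta3_compl q m, odd (delta2_compl q m)
    & rot_max q m (delta2_compl q m)].
Proof.
rewrite /delta2_compl /delta3_compl; case: eqP => [m2 | m_neq2].
  have [[_ -> ->] | [] | []] := delta3_exps_range m_gt1; try lia.
  have cmax : rot_max q m (2 * P + 1).
    by apply: rot_max_of_le => k kk; apply/ltnW/rot_lt_double_lead.
  rewrite m2 expn1 in cmax *; split=> //; first lia.
  by rewrite oddD oddM.
have m_ge3 : 3 <= m by lia.
have /and3P [tt' le1 le2] := delta2_exps m_ge3; have /andP [ltt't lttm] := tt'.
have [le2t le2t'] := (leq_double_exp q_gt1 lttm, leq_double_exp q_gt1 ltt't).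
split; [apply/andP; split | by rewrite !oddD !odd_expq | exact: rot_max3 tt' le1 le2].
  by have := expq_gt0 (delta2_lo m); pow_lia.
have [[] | [_ -> ->] | [m_ge5 /andP [ltba ltam]]] := delta3_exps_range m_gt1; first lia.
  by rewrite expn0; have := expq_gt0 (delta2_lo m); pow_lia.
by rewrite -!addnA ltn_add2l ltn_add_exp // delta2_exps_lt.
Qed.

Lemma odd_leader_gt_delta3 i : i < N ->
  odd_coset_leader q N i && (N - delta3_compl q m < i)
  = (i == N - P) || (i == N - delta2_compl q m).
Proof.
move=> ltiN; have m_gt0 : 0 < m by lia.
have [ltc3N _ _] := delta3_compl_facts.
have [/andP [ltPc2 ltc2c3] c2_odd c2max] := delta2_compl_facts.
have [-> | i_gt0] := posnP i.
  by rewrite /odd_coset_leader /=; symmetry; apply/norP; split; apply/eqP; pow_lia.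
have [c c_bounds ->] : exists2 c, 0 < c < N & i = N - c by exists (N - i); pow_lia.
have /andP [c_gt0 ltcN] := c_bounds.
have ltc3N' := ltnW ltc3N; have ltc2N := ltn_trans ltc2c3 ltc3N.
have ltPN := ltn_trans ltPc2 ltc2N.
rewrite /odd_coset_leader odd_N_sub ?(ltnW ltcN) // ltn_sub2lE //.
rewrite !eqn_sub2lE ?(ltnW ltcN) ?(ltnW ltPN) ?(ltnW ltc2N) //.
apply/idP/idP => [/andP [/andP [c_odd lead] lt_c3] | /orP [/eqP -> | /eqP ->]].
- have cmax := (coset_leader_compl q_gt1 m_gt0 c_bounds).1 lead.
  by have [->|->] := odd_rot_max_lt_delta3 c_bounds c_odd cmax lt_c3; rewrite eqxx ?orbT.
- rewrite odd_expq (ltn_trans ltPc2) // andbT /=.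
  by apply/coset_leader_compl; rewrite ?expq_gt0 ?ltPN //; exact: rot_max_delta1.
rewrite c2_odd ltc2c3 andbT /=; apply/coset_leader_compl => //.
by rewrite ltc2N andbT (leq_ltn_trans _ ltPc2).
Qed.

Lemma delta3_odd_leader : odd_coset_leader q N (N - delta3_compl q m).
Proof.
have [ltc3N c3_odd rot_lt] := delta3_compl_facts.
rewrite /odd_coset_leader odd_N_sub ?c3_odd ?(ltnW ltc3N) //=.
apply/coset_leader_compl; rewrite ?ltc3N ?andbT ?addn_gt0 ?expq_gt0 //; first lia.
by apply: rot_max_of_le => k kk; apply/ltnW/rot_lt.
Qed.

Lemma size_delta3_coset : size (cyc_coset q N (N - delta3_compl q m)) = m.
Proof.
have [ltc3N c3_odd rot_lt] := delta3_compl_facts.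
have c3_bounds : 0 < delta3_compl q m < N by rewrite ltc3N andbT !addn_gt0 expq_gt0.
apply: size_cyc_coset => [//||| k kk]; first lia.
  by rewrite ltn_subrL; pow_lia.
have N_gt0 : 0 < N by pow_lia.
have lekm : k <= m by case/andP: kk => _ /ltnW.
rewrite rot_complE // eqn_sub2lE ?(ltnW ltc3N) ?(ltnW (ltn_pmod _ N_gt0)) //.
by rewrite neq_ltn rot_lt.
Qed.

Lemma delta3_third_largest : third_largest_odd_coset_leader q N (N - delta3_compl q m).
Proof.
split; first exact: delta3_odd_leader.
have [/andP [ltPc2 ltc2c3] _ _] := delta2_compl_facts.
have [ltc3N _ _] := delta3_compl_facts.
rewrite (eq_in_count (a2 := fun i => (i == N - P) || (i == N - delta2_compl q m))).
  by apply: count_pred2_iota; have := expq_gt0 (m - 1); pow_lia.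
by move=> i; rewrite mem_iota => /andP [_ ltiN]; exact: odd_leader_gt_delta3.
Qed.

End LargestOddLeaders.

Theorem lemma20 (q m : nat) :
  prime_power q -> odd q -> 3 <= q -> 2 <= m -> 25 <= q ^ m ->
  let N := q ^ m - 1 in
  let d3 := if ~~ (3 %| m.+1)
            then (q - 1) * q ^ (m - 1) - q ^ ((2 * m + 1) %/ 3)
                 - q ^ (m %/ 3 - 1) - 1
            else (q - 1) * q ^ (m - 1) - q ^ ((2 * m - 1) %/ 3)
                 - q ^ ((m + 1) %/ 3) - 1 in
  third_largest_odd_coset_leader q N d3 /\ size (cyc_coset q N d3) = m.
Proof.
move=> _ q_odd q_gt2 m_gt1 qm_ge25 N d3.
have ed3 : d3 = N - delta3_compl q m.
  have eN : q ^ m = q * q ^ (m - 1) by rewrite -expnS; congr (_ ^ _); lia.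
  by rewrite /d3 /N /delta3_compl /delta3_hi /delta3_lo eN; case: ifP => _; rewrite mulnBl mul1n; pow_lia.
rewrite ed3 /N.
split; [exact: delta3_third_largest | exact: size_delta3_coset].
Qed.
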